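(* Let $q$ be a prime power, $n,r$ integers with $r\le\lfloor n/2\rfloor$, and $0<\rho<r$. For $0 \le \delta \le \rho$, let $T_\delta = \min \sum_{i=0}^r A_i(\delta)$, where the minimum is over all integer sequences $(A_i(\delta))_{i=0}^r$ satisfying: $A_i(\delta) = 0$ for $0\le i\le \delta-1$; $1 \le A_\delta(\delta) \le N_{\mathrm{C}}(\delta)$; $0 \le A_i(\delta)\le N_{\mathrm{C}}(i)$ for $\delta+1\le i\le r$; and $\sum_{i=0}^r A_i(\delta)\sum_{s=0}^\rho J_{\mathrm{C}}(l,s,i) \ge N_{\mathrm{C}}(l)$ for all $0\le l\le r$. Then $K_{\mathrm{C}}(q,n,r,\rho) \ge \max_{0\le\delta\le\rho} T_\delta$.
   Context: $E_r(q,n)$ is the set of $r$-dimensional subspaces of $\mathrm{GF}(q)^n$, with injection distance $d_{\mathrm{I}}(U,V) = \dim(U+V)-\min\{\dim U,\dim V\}$. ${m\brack k}=\prod_{i=0}^{k-1}\frac{q^m-q^i}{q^k-q^i}$; $N_{\mathrm{C}}(d) = q^{d^2}{r\brack d}{n-r \brack d}$ is the number of elements of $E_r(q,n)$ at injection distance $d$ from a fixed one. For $0\le u,s,d\le r$, $J_{\mathrm{C}}(u,s,d)$ is the number of $W\in E_r(q,n)$ with $d_{\mathrm{I}}(W,U)=u$ and $d_{\mathrm{I}}(W,V)=s$, for any fixed $U,V\in E_r(q,n)$ with $d_{\mathrm{I}}(U,V)=d$ (it depends only on $u,s,d$). The covering radius of a nonempty $\mathcal{C}\subseteq E_r(q,n)$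 is $\max_{U}\min_{C\in\mathcal{C}} d_{\mathrm{I}}(U,C)$; $K_{\mathrm{C}}(q,n,r,\rho)$ is the minimum cardinality of a subset of $E_r(q,n)$ with covering radius at most $\rho$. *)

(* Subspaces of GF(q)^n are represented by their canonical
   row-space matrices <<A>>%MS in 'M[F]_n (rows are vectors of F^n). *)
From mathcomp Require Import all_boot all_order all_algebra.
Set Implicit Arguments. Unset Strict Implicit. Unset Printing Implicit Defensive.
Import Order.TTheory GRing.Theory Num.Theory.

Local Open Scope ring_scope.

Section Grass.
Variables (F : finFieldType) (n r : nat).

Definition Er : {set 'M[F]_n} :=
  [set A : 'M[F]_n | (<<A>>%MS == A) && (\rank A == r)%N].

Definition dI (U V : 'M[F]_n) : nat :=
  (\rank (U + V)%MS - minn (\rank U) (\rank V))%N.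

(* J_C(u,s,d): number of W in E_r with d_I(W,U)=u and d_I(W,V)=s, for a fixed
   (chosen) pair U,V in E_r with d_I(U,V)=d; 0 if no such pair exists. *)
Definition JC (u s d : nat) : nat :=
  match [pick p : 'M[F]_n * 'M[F]_n |
           (p.1 \in Er) && (p.2 \in Er) && (dI p.1 p.2 == d)] with
  | Some p => #|[set W in Er | (dI W p.1 == u) && (dI W p.2 == s)]|
  | None => 0%N
  end.

(* covering radius of a nonempty code C ⊆ E_r:
   max_{U in E_r} min_{C0 in C} d_I(U,C0)
   (the default value n of the inner min is irrelevant for nonempty C since
   all distances are <= r <= n) *)
Definition covrad (C : {set 'M[F]_n}) : nat :=
  \max_(U in Er) \big[minn/n]_(C0 in C) dI U C0.

(* K_C(q,n,r,rho): minimum cardinality of a nonempty subset of E_r with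
   covering radius at most rho (E_r itself is such a subset). *)
Definition KC (rho : nat) : nat :=
  \big[minn/#|Er|]_(C : {set 'M[F]_n} |
       [&& C \subset Er, C != set0 & (covrad C <= rho)%N]) #|C|.

End Grass.

Definition gbin (q m k : nat) : rat :=
  \prod_(i < k) (((q ^ m)%:R - (q ^ i)%:R) / ((q ^ k)%:R - (q ^ i)%:R)).

Definition NC (q n r d : nat) : rat :=
  (q ^ (d * d))%:R * gbin q r d * gbin q (n - r) d.

Definition feasible (F : finFieldType) (n r rho delta : nat) (A : nat -> int)
  : Prop :=
  let q := #|F| in
  (forall i, (i < delta)%N -> A i = 0)
  /\ (1 <= A delta /\ (A delta)%:~R <= NC q n r delta)
  /\ (forall i, (delta < i <= r)%N -> 0 <= A i /\ (A i)%:~R <= NC q n r i)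
  /\ (forall l, (l <= r)%N ->
        NC q n r l <=
        \sum_(i < r.+1) (A i)%:~R *
            (\sum_(s < rho.+1) (JC F n r l s i))%:R).

Definition is_T (F : finFieldType) (n r rho delta : nat) (t : int) : Prop :=
  (exists A, feasible F n r rho delta A /\ \sum_(i < r.+1) A i = t)
  /\ (forall A, feasible F n r rho delta A -> t <= \sum_(i < r.+1) A i).

From Pilot Require Import Defs.
From mathcomp Require Import all_boot all_order all_algebra zify ring.
From Stdlib Require Import Classical.
Import Order.TTheory GRing.Theory Num.Theory.
Set Implicit Arguments. Unset Strict Implicit. Unset Printing Implicit Defensive.
Local Open Scope ring_scope.

(* Take a code D with |D| <= K_C(q,n,r,rho) and covering radius <= rho, and a
   subspace U at distance exactly delta from D, and set
   A_i := #{c in D | d_I(U, c) = i}. Then A_i = 0 for i < delta, 1 <= A_delta,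
   A_i <= N_C(i) (the size of the sphere of radius i about U), the A_i sum to
   |D|, and since each W at distance l from U lies within rho of some codeword,
   N_C(l) <= sum_i A_i sum_(s <= rho) J_C(l, s, i); here J_C(l, s, i) counts
   the right set for every pair at distance i because GL_n(q) acts
   transitively on such pairs. Such a U exists: moving along a geodesic, the
   distance to D changes by at most one per step, so it takes every value up
   to the covering radius; and if the covering radius of D is below delta,
   pulling all codewords one step at a time towards a fixed codeword raises
   it to exactly delta without enlarging the code. *)

Section RowSpaces.
Variables (F : fieldType) (n : nat).

Lemma exists_submx_rank m (A : 'M[F]_(m, n)) j : (j <= \rank A)%N ->
  exists B : 'M[F]_n, (B <= A)%MS /\ \rank B = j.
Proof.
move=> hj; exists ((pid_mx j : 'M[F]_(n, \rank A)) *m row_base A); split.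
  by rewrite (submx_trans (submxMl _ _)) ?eq_row_base.
by rewrite mxrankMfree ?row_base_free // rank_pid_mx // (leq_trans hj (rank_leq_col A)).
Qed.

Lemma capmx_eq0S m1 m2 m3 m4 (A : 'M[F]_(m1, n)) (B : 'M[F]_(m2, n))
    (A' : 'M[F]_(m3, n)) (B' : 'M[F]_(m4, n)) :
  (A' <= A)%MS -> (B' <= B)%MS -> (A :&: B)%MS = 0 -> (A' :&: B')%MS = 0.
Proof. by move=> sA sB AB0; apply/eqP; rewrite -submx0 -AB0 capmxS. Qed.

Lemma mxrank_adds_disjoint m d (A : 'M[F]_(m, n)) (B : 'M[F]_(d, n)) :
  \rank (A + B)%MS = (\rank A + d)%N -> \rank B = d /\ (A :&: B)%MS = 0.
Proof.
move=> h; have := mxrank_sum_cap A B; rewrite h; have := rank_leq_row B => hB e.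
have rB : \rank B = d by lia.
by split => //; apply/eqP; rewrite -mxrank_eq0; apply/eqP; lia.
Qed.

Lemma exists_submx_between (K X : 'M[F]_n) j :
  (K <= X)%MS -> (\rank K <= j <= \rank X)%N ->
  exists H : 'M[F]_n, [/\ (K <= H)%MS, (H <= X)%MS & \rank H = j].
Proof.
move=> KX /andP [Kj jX].
have rXK : \rank (X :\: K) = (\rank X - \rank K)%N.
  by have := mxrank_cap_compl X K; rewrite (capmx_idPr KX); lia.
have [B [BXK rB]] : exists B : 'M[F]_n, (B <= X :\: K)%MS /\ \rank B = (j - \rank K)%N.
  by apply: exists_submx_rank; rewrite rXK leq_sub2r.
have KB0 : (K :&: B)%MS = 0.
  by apply: (capmx_eq0S (submx_refl K) BXK); rewrite capmxC capmx_diff.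
exists (K + B)%MS; split; first exact: addsmxSl.
  by rewrite addsmx_sub KX (submx_trans BXK) ?diffmxSl.
by rewrite mxrank_disjoint_sum // rB subnKC.
Qed.

Lemma mxrank_adds_row m (A : 'M[F]_(m, n)) (v : 'rV[F]_n) :
  \rank (A + v)%MS = (\rank A + ~~ (v <= A)%MS)%N.
Proof.
case: (boolP (v <= A)%MS) => vA /=.
  rewrite addn0; apply/eqP.
  by rewrite eq_sym (mxrank_leqif_sup (addsmxSl A v)) addsmx_sub submx_refl vA.
have v0 : v != 0 by apply: contraNneq vA => ->; rewrite sub0mx.
have capA0 : (A :&: v)%MS = 0.
  apply/eqP; rewrite -mxrank_eq0 -leqn0; apply: contraNT vA; rewrite -ltnNge => cap_gt0.
  have rv : \rank (A :&: v)%MS = \rank v.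
    by apply/eqP; rewrite eqn_leq mxrankS ?capmxSr // rank_rV v0.
  by rewrite (submx_trans _ (capmxSl A v)) // -(mxrank_leqif_sup (capmxSr A v)) rv.
by rewrite mxrank_disjoint_sum // rank_rV v0.
Qed.

Lemma addsmx_col_mx s m (S : 'M[F]_(s, n)) (A : 'M[F]_(m, n)) (v : 'rV[F]_n) :
  (S + col_mx v A :=: (S + A) + v)%MS.
Proof.
have := submx_refl (col_mx v A); rewrite col_mx_sub => /andP [vc Ac].
apply/eqmxP/andP; split; rewrite !addsmx_sub ?col_mx_sub.
  rewrite (submx_trans (addsmxSl S A) (addsmxSl _ v)) addsmxSr /=.
  by rewrite (submx_trans (addsmxSr S A) (addsmxSl _ v)).
by rewrite addsmxSl /= (submx_trans Ac (addsmxSr _ _)) (submx_trans vc (addsmxSr _ _)).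
Qed.

End RowSpaces.

Section RowSpaceCounting.
Variable F : finFieldType.
Local Notation q := #|F|.

Lemma card_rV_submx n m (X : 'M[F]_(m, n)) :
  #|[set v : 'rV[F]_n | (v <= X)%MS]| = (q ^ \rank X)%N.
Proof.
have -> : [set v : 'rV[F]_n | (v <= X)%MS] =
          [set u *m row_base X | u in [set: 'rV[F]_(\rank X)]].
  apply/setP => v; rewrite inE; apply/idP/imsetP.
    by rewrite -(eq_row_base X) => /submxP [u ->]; exists u; rewrite ?inE.
  by case=> u _ ->; rewrite (submx_trans (submxMl _ _)) // eq_row_base.
rewrite card_imset; last exact: row_free_inj (row_base_free X).
by rewrite cardsT card_mx mul1n.
Qed.

Lemma card_rV_submx_diff n m1 m2 (T : 'M[F]_(m1, n)) (Y : 'M[F]_(m2, n)) :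
  (Y <= T)%MS ->
  #|[set v : 'rV[F]_n | (v <= T)%MS && ~~ (v <= Y)%MS]| = (q ^ \rank T - q ^ \rank Y)%N.
Proof.
move=> YT; rewrite -!card_rV_submx.
have /setIidPr <- : [set v : 'rV[F]_n | (v <= Y)%MS] \subset [set v | (v <= T)%MS].
  by apply/subsetP => v; rewrite !inE => /submx_trans->.
by rewrite -cardsD; apply: eq_card => v; rewrite !inE andbC.
Qed.

Definition free_ext n s t (S : 'M[F]_(s, n)) (T : 'M[F]_(t, n)) m :=
  [set B : 'M[F]_(m, n) | (B <= T)%MS && (\rank (S + B) == \rank S + m)%N].

Lemma card_free_ext n s t (S : 'M[F]_(s, n)) (T : 'M[F]_(t, n)) m :
  (S <= T)%MS -> #|free_ext S T m| =
  (\prod_(i < m) (q ^ \rank T - q ^ (\rank S + i)))%N.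
Proof.
move=> ST; elim: m => [|m IHm].
  rewrite big_ord0 -(card1 (0 : 'M[F]_(0, n))) /free_ext; apply: eq_card => B.
  by rewrite !inE [B]flatmx0 sub0mx addsmx0 addn0 !eqxx.
rewrite big_ord_recr /= -{}IHm -[LHS]sum1_card -[m.+1]add1n /free_ext.
set Pm := [set B : 'M[F]_(m, n) | _].
rewrite (partition_big dsubmx (mem Pm)) /=; last first.
  move=> B; rewrite !inE -[B]vsubmxK col_mx_sub col_mxKd addsmx_col_mx.
  case/andP=> /andP [_ ->] /=; rewrite mxrank_adds_row.
  have : (\rank (S + dsubmx B)%MS <= \rank S + m)%N.
    by rewrite (leq_trans (mxrank_adds_leqif _ _)) // leq_add2l rank_leq_row.
  by case: (~~ _) => /= ? /eqP ?; apply/eqP; lia.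
rewrite -sum_nat_const; apply: eq_bigr => A; rewrite inE => /andP [AT /eqP rA].
rewrite (reindex (col_mx^~ A)) /=; last first.
  exists usubmx => [v _ | B]; first by rewrite col_mxKu.
  by case/andP=> _ /eqP <-; rewrite vsubmxK.
rewrite -rA -card_rV_submx_diff ?addsmx_sub ?ST // -sum1_card.
apply: eq_bigl => v; rewrite !inE col_mxKd eqxx andbT col_mx_sub AT andbT.
rewrite addsmx_col_mx mxrank_adds_row rA -addnA eqn_add2l.
by case: (~~ _); rewrite (addn1, addn0) add1n ?eqxx ?andbT // (ltn_eqF (ltnSn m)) andbF.
Qed.

Lemma free_ext0 n t (T : 'M[F]_(t, n)) m (B : 'M[F]_(m, n)) :
  (B \in free_ext (0 : 'M[F]_n) T m) = (B <= T)%MS && (\rank B == m).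
Proof. by rewrite inE adds0mx mxrank0. Qed.

End RowSpaceCounting.


Section GrassmannMetric.
Variables (F : finFieldType) (n r : nat).
Local Notation Er := (Er F n r).
Local Notation dI := (@dI F n).

Lemma inErP (U : 'M[F]_n) : reflect (<<U>>%MS = U /\ \rank U = r) (U \in Er).
Proof. by rewrite inE; apply: (iffP andP) => [[/eqP ? /eqP ?]|[-> ->]]. Qed.

Lemma Er_rank (U : 'M[F]_n) : U \in Er -> \rank U = r.
Proof. by case/inErP. Qed.

Lemma Er_genmx (U : 'M[F]_n) : U \in Er -> <<U>>%MS = U.
Proof. by case/inErP. Qed.

Lemma genmx_Er m (A : 'M[F]_(m, n)) : \rank A = r -> <<A>>%MS \in Er.
Proof. by move=> rA; apply/inErP; rewrite genmx_id mxrank_gen. Qed.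

Lemma dI_Er (U V : 'M[F]_n) : U \in Er -> V \in Er -> dI U V = (\rank (U + V) - r)%N.
Proof. by rewrite /Defs.dI => /inErP [_ ->] /inErP [_ ->]; rewrite minnn. Qed.

Lemma mxrank_cap_dI (U V : 'M[F]_n) : U \in Er -> V \in Er ->
  (\rank (U :&: V) + dI U V)%N = r.
Proof.
move=> hU hV; rewrite dI_Er //; have := mxrank_sum_cap U V.
have := mxrankS (addsmxSl U V).
by move: hU hV => /inErP [_ ->] /inErP [_ ->]; lia.
Qed.

Lemma dI_sym (U V : 'M[F]_n) : dI U V = dI V U.
Proof. by rewrite /Defs.dI addsmxC minnC. Qed.

Lemma dI_le (U V : 'M[F]_n) : U \in Er -> V \in Er -> (dI U V <= r)%N.
Proof. by move=> hU hV; have := mxrank_cap_dI hU hV; lia. Qed.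

Lemma dIxx (U : 'M[F]_n) : U \in Er -> dI U U = 0%N.
Proof.
move=> hU; have := mxrank_cap_dI hU hU.
by rewrite (capmx_idPl (submx_refl U)) (Er_rank hU); lia.
Qed.

Lemma dI_eq0 (U V : 'M[F]_n) : U \in Er -> V \in Er -> dI U V = 0%N -> U = V.
Proof.
move=> hU hV dUV0; have := mxrank_cap_dI hU hV; rewrite dUV0 addn0 => rUV.
have UV : (U <= V)%MS.
  by rewrite (submx_trans _ (capmxSr U V)) // -(mxrank_leqif_sup (capmxSl U V)) rUV !Er_rank.
have VU : (V <= U)%MS.
  by rewrite (submx_trans _ (capmxSl U V)) // -(mxrank_leqif_sup (capmxSr U V)) rUV !Er_rank.
by rewrite -(Er_genmx hU) -(Er_genmx hV); apply/genmxP/andP.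
Qed.

(* Both U :&: V and V :&: W lie in the r-dimensional V, so they meet in
   dimension at least r - dI U V - dI V W, inside U :&: W. *)
Lemma dI_triangle (U V W : 'M[F]_n) : U \in Er -> V \in Er -> W \in Er ->
  (dI U W <= dI U V + dI V W)%N.
Proof.
move=> hU hV hW.
have := mxrank_cap_dI hU hV; have := mxrank_cap_dI hV hW; have := mxrank_cap_dI hU hW.
have := mxrank_sum_cap (U :&: V)%MS (V :&: W)%MS.
have : (\rank (U :&: V + V :&: W)%MS <= r)%N.
  by rewrite -(Er_rank hV) mxrankS // addsmx_sub capmxSr capmxSl.
have : (\rank ((U :&: V) :&: (V :&: W))%MS <= \rank (U :&: W)%MS)%N.
  by rewrite mxrankS // capmxS ?capmxSl ?capmxSr.
lia.
Qed.

End GrassmannMetric.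

Section Spheres.
Variables (F : finFieldType) (n r : nat).
Local Notation q := #|F|.
Local Notation Er := (Er F n r).
Local Notation dI := (@dI F n).

Definition sphere (U : 'M[F]_n) d := [set W in Er | dI W U == d].

Variables (U : 'M[F]_n) (d : nat).
Hypotheses (hU : U \in Er) (hd : (d <= r)%N).
Local Notation k := (r - d)%N.

Lemma mxrank_col_frames (B1 : 'M[F]_(k, n)) (B2 : 'M[F]_(d, n)) :
  (B1 <= U)%MS -> \rank B1 = k -> \rank (U + B2) = (\rank U + d)%N ->
  \rank (col_mx B1 B2) = r.
Proof.
move=> B1U rB1 /mxrank_adds_disjoint [rB2 UB2].
rewrite -addsmxE mxrank_disjoint_sum ?rB1 ?rB2 ?subnK //.
exact: capmx_eq0S UB2.
Qed.

(* Every W in the sphere is spanned by a basis of W :&: U completed by a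
   frame of W independent from U; such pairs are counted by [card_free_ext]. *)
Definition sphere_frames := setX (free_ext (0 : 'M[F]_n) U k) (free_ext U (1%:M : 'M[F]_n) d).

Lemma span_sphere_frames B : B \in sphere_frames -> <<col_mx B.1 B.2>>%MS \in sphere U d.
Proof.
case: B => B1 B2 /setXP [/=]; rewrite free_ext0 inE => /andP [B1U /eqP rB1].
case/andP=> _ /eqP rUB2; have rW := mxrank_col_frames B1U rB1 rUB2.
have hW := genmx_Er rW; rewrite inE hW (dI_Er hW hU) /=.
suff -> : \rank (<<col_mx B1 B2>> + U)%MS = \rank (U + B2) by rewrite rUB2 (Er_rank hU) addKn.
apply/eqP; rewrite eqn_leq !mxrankS // !addsmx_sub ?addsmxSr ?addsmxSl ?andbT //.
  by rewrite /= (submx_trans _ (addsmxSl _ _)) // genmxE -addsmxE addsmxSr.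
by rewrite genmxE col_mx_sub (submx_trans B1U) ?addsmxSl ?addsmxSr.
Qed.

Lemma sphere_frames_fibre W : W \in sphere U d ->
  [set B in sphere_frames | <<col_mx B.1 B.2>>%MS == W] =
  setX (free_ext (0 : 'M[F]_n) (W :&: U)%MS k) (free_ext (W :&: U)%MS W d).
Proof.
rewrite inE => /andP [hW /eqP dWU].
have rWU : \rank (W :&: U) = k by have := mxrank_cap_dI hW hU; rewrite dWU; lia.
apply/setP => -[B1 B2]; rewrite inE !in_setX /= !free_ext0 !inE sub_capmx.
apply/idP/idP.
  case/andP=> /andP [/andP [B1U /eqP rB1] /andP [_ /eqP rUB2]] /eqP eW.
  have : (col_mx B1 B2 <= W)%MS by rewrite -eW genmxE.
  rewrite col_mx_sub rB1 rWU => /andP [-> ->]; rewrite B1U /=.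
  case/mxrank_adds_disjoint: rUB2 => rB2 UB2.
  by rewrite mxrank_disjoint_sum ?rB2 ?rWU ?eqxx // (capmx_eq0S (capmxSr W U) _ UB2).
case/andP=> /andP [/andP [B1W B1U] /eqP rB1] /andP [B2W /eqP rWUB2].
case/mxrank_adds_disjoint: (rWUB2) => rB2 WUB2.
have UB2 : (U :&: B2)%MS = 0.
  apply/eqP; rewrite -submx0 -WUB2 sub_capmx capmxSr andbT sub_capmx capmxSl.
  by rewrite (submx_trans (capmxSr _ _) B2W).
rewrite B1U rB1 submx1 mxrank_disjoint_sum // rB2 !eqxx /=.
have sW : (col_mx B1 B2 <= W)%MS by rewrite col_mx_sub B1W B2W.
have rW : \rank (col_mx B1 B2) = r.
  by rewrite (mxrank_col_frames B1U rB1) // mxrank_disjoint_sum ?rB2.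
rewrite -(Er_genmx hW); apply/eqP/eq_genmx/eqmxP.
by rewrite -(mxrank_leqif_eq sW) rW (Er_rank hW).
Qed.

Lemma card_sphere_mul :
  (#|sphere U d| * ((\prod_(i < k) (q ^ k - q ^ i)) * \prod_(i < d) (q ^ r - q ^ (k + i))))%N =
  ((\prod_(i < k) (q ^ r - q ^ i)) * \prod_(i < d) (q ^ n - q ^ (r + i)))%N.
Proof.
have -> : ((\prod_(i < k) (q ^ r - q ^ i)) * \prod_(i < d) (q ^ n - q ^ (r + i)))%N =
          #|sphere_frames|.
  by rewrite cardsX !card_free_ext ?sub0mx ?submx1 // mxrank0 mxrank1 (Er_rank hU).
rewrite -[RHS]sum1_card (partition_big (fun B => <<col_mx B.1 B.2>>%MS) (mem (sphere U d)))
  /=; last exact: span_sphere_frames.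
rewrite -sum_nat_const; apply: eq_bigr => W hW.
rewrite sum1dep_card -/(sphere_frames) sphere_frames_fibre // cardsX.
move: hW; rewrite inE => /andP [hW /eqP dWU].
have rWU : \rank (W :&: U) = k by have := mxrank_cap_dI hW hU; rewrite dWU; lia.
by rewrite !card_free_ext ?sub0mx ?capmxSl // mxrank0 rWU (Er_rank hW).
Qed.

End Spheres.

Section GaussianBinomial.
Variables (q : nat) (hq : (1 < q)%N).
Local Notation x := (q%:R : rat).

Definition qprod m j := \prod_(i < j) (x ^+ m - x ^+ i).

Lemma natr_qdiff a b : (a <= b)%N -> ((q ^ b - q ^ a)%N%:R : rat) = x ^+ b - x ^+ a.
Proof. by move=> ab; rewrite natrB ?natrX // leq_exp2l. Qed.

Lemma qprod_neq0 m j : (j <= m)%N -> qprod m j != 0.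
Proof.
move=> jm; apply/prodf_neq0 => i _; rewrite -natr_qdiff ?pnatr_eq0 -?lt0n ?subn_gt0.
  by rewrite ltn_exp2l // (leq_trans (ltn_ord i)).
by rewrite ltnW // (leq_trans (ltn_ord i)).
Qed.

Lemma gbinE m j : gbin q m j * qprod j j = qprod m j.
Proof.
have natr_qprod l : \prod_(i < j) ((q ^ l)%:R - (q ^ i)%:R) = qprod l j :> rat.
  by apply: eq_bigr => i _; rewrite !natrX.
by rewrite /gbin prodf_div !natr_qprod divfK ?qprod_neq0.
Qed.

Lemma qprod_shift a b m :
  \prod_(i < m) (x ^+ (a + b) - x ^+ (a + i)) = x ^+ (a * m) * qprod b m.
Proof.
have -> : x ^+ (a * m) = \prod_(i < m) x ^+ a by rewrite prodr_const card_ord exprM.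
rewrite /qprod -big_split /=.
by apply: eq_bigr => i _; rewrite !exprD mulrBr.
Qed.

Lemma qprod_split a b : qprod (a + b) (a + b) = qprod (a + b) a * (x ^+ (a * b) * qprod b b).
Proof. by rewrite /qprod big_split_ord /= -qprod_shift. Qed.

Lemma gbin_add_mul k d : gbin q (k + d) d * qprod k k = qprod (k + d) k.
Proof.
have xkd_neq0 : x ^+ (k * d) * qprod d d != 0.
  by rewrite mulf_neq0 ?qprod_neq0 // expf_neq0 // pnatr_eq0 -lt0n ltnW.
apply: (mulIf xkd_neq0); rewrite -qprod_split [in RHS]addnC qprod_split.
by rewrite [(d + k)%N]addnC [(d * k)%N]mulnC -(gbinE (k + d) d); ring.
Qed.

Lemma natr_qprod m j : (j <= m)%N ->
  ((\prod_(i < j) (q ^ m - q ^ i))%N%:R : rat) = qprod m j.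
Proof.
move=> jm; rewrite natr_prod; apply: eq_bigr => i _.
by rewrite natr_qdiff // ltnW // (leq_trans (ltn_ord i)).
Qed.

Lemma natr_qprod_shift a m j : (a + j <= m)%N ->
  ((\prod_(i < j) (q ^ m - q ^ (a + i)))%N%:R : rat) = x ^+ (a * j) * qprod (m - a) j.
Proof.
move=> ajm; rewrite -qprod_shift subnKC ?natr_prod; last by rewrite (leq_trans (leq_addr j a)).
by apply: eq_bigr => i _; rewrite natr_qdiff // ltnW // (leq_trans _ ajm) // ltn_add2l.
Qed.

Lemma NC_qprod n k d :
  NC q n (k + d) d * (qprod k k * (x ^+ (k * d) * qprod d d)) =
  qprod (k + d) k * (x ^+ ((k + d) * d) * qprod (n - (k + d)) d).
Proof.
rewrite /NC natrX -(gbin_add_mul k d) -(gbinE (n - (k + d)) d) mulnDl exprD.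
by ring.
Qed.

End GaussianBinomial.

Lemma card_sphere (F : finFieldType) n r (U : 'M[F]_n) d :
  U \in Er F n r -> (d <= r)%N -> (r + d <= n)%N ->
  (#|sphere r U d|%:R : rat) = NC #|F| n r d.
Proof.
move=> hU hd hn; have := congr1 (fun m => m%:R : rat) (card_sphere_mul hU hd).
have hq : (1 < #|F|)%N by exact: card_finNzRing_gt1.
set k := (r - d)%N; have er : r = (k + d)%N by rewrite subnK.
rewrite /= !natrM !natr_qprod ?leq_subr // !natr_qprod_shift ?subnK // subKn //.
have hX : qprod #|F| k k * ((#|F|%:R : rat) ^+ (k * d) * qprod #|F| d d) != 0.
  by rewrite !mulf_neq0 ?qprod_neq0 // expf_neq0 // pnatr_eq0 -lt0n ltnW.
by move=> E; apply: (mulIf hX); rewrite E er NC_qprod.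
Qed.

Section PairTransitivity.
Variables (F : finFieldType) (n r : nat).
Local Notation Er := (Er F n r).
Local Notation dI := (@dI F n).

Definition row_base_cast (A : 'M[F]_n) m (e : \rank A = m) : 'M[F]_(m, n) :=
  castmx (e, erefl n) (row_base A).

Lemma eq_row_base_cast (A : 'M[F]_n) m (e : \rank A = m) : (row_base_cast e :=: A)%MS.
Proof. exact: eqmx_trans (eqmx_cast _ _) (eq_row_base A). Qed.

Lemma submx_col_mxl m1 m2 (A : 'M[F]_(m1, n)) (B : 'M[F]_(m2, n)) : (A <= col_mx A B)%MS.
Proof. by rewrite -addsmxE addsmxSl. Qed.

Lemma submx_col_mxr m1 m2 (A : 'M[F]_(m1, n)) (B : 'M[F]_(m2, n)) : (B <= col_mx A B)%MS.
Proof. by rewrite -addsmxE addsmxSr. Qed.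

(* A basis of F^n adapted to the pair (U, V): a basis of U :&: V, completions
   to bases of U and of V, and a basis of a complement of U + V. *)
Lemma adapted_basis (U V : 'M[F]_n) k :
  \rank U = r -> \rank V = r -> \rank (U :&: V) = k ->
  exists (Kb : 'M[F]_(k, n)) (Ub Vb : 'M[F]_(r - k, n))
         (Rb : 'M[F]_(n - (k + (r - k) + (r - k)), n)),
  [/\ row_free (col_mx Kb (col_mx Ub (col_mx Vb Rb))),
      (Kb + Ub :=: U)%MS & (Kb + Vb :=: V)%MS].
Proof.
move=> rU rV rUV.
have rUdV : \rank (U :\: V) = (r - k)%N.
  by have := mxrank_cap_compl U V; rewrite rUV rU; lia.
have rVdU : \rank (V :\: U) = (r - k)%N.
  by have := mxrank_cap_compl V U; rewrite capmxC rUV rV; lia.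
have rUV_sum : \rank (U + V) = (k + (r - k) + (r - k))%N.
  have := mxrank_sum_cap U V; rewrite rUV rU rV.
  by have := mxrankS (capmxSl U V); rewrite rUV rU; lia.
have rC : \rank (U + V)^C = (n - (k + (r - k) + (r - k)))%N by rewrite mxrank_compl rUV_sum.
set Kb := row_base_cast rUV; set Ub := row_base_cast rUdV.
set Vb := row_base_cast rVdU; set Rb := row_base_cast rC.
have eU : (Kb + Ub :=: U)%MS.
  apply: eqmx_trans (adds_eqmx (eq_row_base_cast _) (eq_row_base_cast _)) _.
  by rewrite addsmxC; apply: addsmx_diff_cap_eq.
have eV : (Kb + Vb :=: V)%MS.
  apply: eqmx_trans (adds_eqmx (eq_row_base_cast _) (eq_row_base_cast _)) _.
  by rewrite addsmxC capmxC; apply: addsmx_diff_cap_eq.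
exists Kb, Ub, Vb, Rb; split => //.
set P := col_mx _ _.
have sU : (Ub <= P)%MS by rewrite (submx_trans _ (submx_col_mxr _ _)) ?submx_col_mxl.
have sVR : (col_mx Vb Rb <= P)%MS.
  by rewrite (submx_trans _ (submx_col_mxr Kb _)) // submx_col_mxr.
have sV : (Vb <= P)%MS by rewrite (submx_trans (submx_col_mxl _ _) sVR).
have sR : (Rb <= P)%MS by rewrite (submx_trans (submx_col_mxr _ _) sVR).
have UP : (U <= P)%MS by rewrite -eU addsmx_sub submx_col_mxl sU.
have VP : (V <= P)%MS by rewrite -eV addsmx_sub submx_col_mxl sV.
have CP : ((U + V)^C <= P)%MS by rewrite -(eq_row_base_cast rC).
have fullP : (n <= \rank P)%N.
  have /eqP {1}<- := addsmx_compl_full (U + V)%MS.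
  by apply: mxrankS; rewrite !addsmx_sub UP VP CP.
rewrite /row_free eqn_leq rank_leq_row (leq_trans _ fullP) //.
by have := rank_leq_col (U + V)%MS; rewrite rUV_sum; lia.
Qed.

Lemma Er_pair_transitive (U V U' V' : 'M[F]_n) :
  U \in Er -> V \in Er -> U' \in Er -> V' \in Er -> dI U V = dI U' V' ->
  exists2 M : 'M[F]_n, M \in unitmx & (<<U *m M>>%MS = U' /\ <<V *m M>>%MS = V').
Proof.
move=> hU hV hU' hV' dUV.
have rUV' : \rank (U' :&: V') = \rank (U :&: V).
  by have := mxrank_cap_dI hU hV; have := mxrank_cap_dI hU' hV'; rewrite dUV; lia.
have [Kb [Ub [Vb [Rb [freeP eU eV]]]]] := adapted_basis (Er_rank hU) (Er_rank hV) (erefl _).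
have [Kb' [Ub' [Vb' [Rb' [freeP' eU' eV']]]]] :=
  adapted_basis (Er_rank hU') (Er_rank hV') rUV'.
set P := col_mx Kb _ in freeP; set P' := col_mx Kb' _ in freeP'.
pose M := pinvmx P *m P'.
have PM : P *m M = P' by rewrite /M mulmxA mulmxVp // mul1mx.
move: (PM); rewrite !mul_col_mx => /eq_col_mx [eK /eq_col_mx [eUb /eq_col_mx [eVb _]]].
exists M.
  rewrite -row_free_unit /row_free eqn_leq rank_leq_row /=.
  have := mxrankM_maxr P M; rewrite PM; move/eqP: freeP' => ->.
  by apply: leq_trans; lia.
split.
  rewrite -(Er_genmx hU'); apply/eq_genmx.
  apply: eqmx_trans (eqmxMr M (eqmx_sym eU)) _.
  by apply: eqmx_trans (addsmxMr _ _ _) _; rewrite eK eUb.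
rewrite -(Er_genmx hV'); apply/eq_genmx.
apply: eqmx_trans (eqmxMr M (eqmx_sym eV)) _.
by apply: eqmx_trans (addsmxMr _ _ _) _; rewrite eK eVb.
Qed.

Section Transport.
Variable M : 'M[F]_n.
Hypothesis uM : M \in unitmx.

Definition transport (W : 'M[F]_n) : 'M[F]_n := <<W *m M>>%MS.

Lemma mxrank_transport W : \rank (transport W) = \rank W.
Proof. by rewrite mxrank_gen mxrankMfree // row_free_unit. Qed.

Lemma transport_Er W : W \in Er -> transport W \in Er.
Proof. by move=> hW; apply: genmx_Er; rewrite mxrankMfree ?(Er_rank hW) ?row_free_unit. Qed.

Lemma dI_transport W W' : dI (transport W) (transport W') = dI W W'.
Proof.
rewrite /Defs.dI !mxrank_transport (adds_eqmx (genmxE _) (genmxE _)) -addsmxMr.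
by rewrite mxrankMfree // row_free_unit.
Qed.

Lemma transport_inj : {in Er &, injective transport}.
Proof.
move=> W W' hW hW' /genmxP eWW'.
rewrite -(Er_genmx hW) -(Er_genmx hW'); apply/eq_genmx.
by have := eqmxMr (invmx M) (eqmxP eWW'); rewrite !mulmxK.
Qed.

Lemma transport_onto W' : W' \in Er -> exists2 W, W \in Er & transport W = W'.
Proof.
move=> hW'; exists <<W' *m invmx M>>%MS.
  by apply: genmx_Er; rewrite mxrankMfree ?(Er_rank hW') ?row_free_unit ?unitmx_inv.
by rewrite /transport (eq_genmx (eqmxMr M (genmxE _))) mulmxKV // (Er_genmx hW').
Qed.

End Transport.

Lemma card_sphere_pair_invariant (U V U' V' : 'M[F]_n) l s :
  U \in Er -> V \in Er -> U' \in Er -> V' \in Er -> dI U V = dI U' V' ->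
  #|[set W in Er | (dI W U == l) && (dI W V == s)]| =
  #|[set W in Er | (dI W U' == l) && (dI W V' == s)]|.
Proof.
move=> hU hV hU' hV' dUV.
have [M uM [<- <-]] := Er_pair_transitive hU hV hU' hV' dUV.
rewrite -(card_in_imset (f := transport M)); last first.
  by move=> W W' /setIdP [hW _] /setIdP [hW' _]; apply: transport_inj.
apply: eq_card => W'; rewrite inE -/(transport M U) -/(transport M V).
apply/imsetP/andP => [[W /setIdP [hW dW] ->]|[hW' dW']].
  by rewrite transport_Er // !dI_transport.
have [W hW eW] := transport_onto uM hW'.
by exists W => //; rewrite inE hW -eW !dI_transport in dW' *.
Qed.

Lemma JC_dI (U V : 'M[F]_n) l s : U \in Er -> V \in Er ->
  JC F n r l s (dI U V) = #|[set W in Er | (dI W U == l) && (dI W V == s)]|.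
Proof.
move=> hU hV; rewrite /JC; case: pickP => [[U' V'] /= /andP [/andP [hU' hV'] /eqP dUV]|none].
  exact: card_sphere_pair_invariant.
by have := none (U, V); rewrite /= hU hV eqxx.
Qed.

End PairTransitivity.

Section Geodesics.
Variables (F : finFieldType) (n r : nat).
Local Notation Er := (Er F n r).
Local Notation dI := (@dI F n).

(* Keep a hyperplane H of X containing X :&: Y and add a vector of Y outside X. *)
Lemma exists_step_towards (X Y : 'M[F]_n) : X \in Er -> Y \in Er -> (0 < dI X Y)%N ->
  exists Z, [/\ Z \in Er, (dI X Z <= 1)%N & (dI Z Y < dI X Y)%N].
Proof.
move=> hX hY dXY_gt0; have rXY := mxrank_cap_dI hX hY.
have rX := Er_rank hX; set K := (X :&: Y)%MS in rXY.
have [H [KH HX rH]] : exists H : 'M[F]_n, [/\ (K <= H)%MS, (H <= X)%MS & \rank H = r.-1].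
  by apply: exists_submx_between; rewrite ?capmxSl // rX leq_pred; lia.
have /row_subPn [i yX] : ~~ (Y <= X)%MS.
  by apply: contraTN dXY_gt0 => YX; rewrite /K (capmx_idPr YX) (Er_rank hY) in rXY; lia.
set y := row i Y in yX; have yY : (y <= Y)%MS := row_sub i Y.
have yH : ~~ (y <= H)%MS by apply: contra yX => /submx_trans->.
pose Z := <<(H + y)%MS>>%MS.
have hZ : Z \in Er by apply: genmx_Er; rewrite mxrank_adds_row yH rH; lia.
have HZ : (H <= Z)%MS by rewrite genmxE addsmxSl.
have yZ : (y <= Z)%MS by rewrite genmxE addsmxSr.
exists Z; split => //.
  have := mxrank_cap_dI hX hZ.
  have : (\rank H <= \rank (X :&: Z))%N by rewrite mxrankS // sub_capmx HX HZ.
  by rewrite rH; lia.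
have := mxrank_cap_dI hZ hY.
have : (\rank (K + y)%MS <= \rank (Z :&: Y))%N.
  by rewrite mxrankS // addsmx_sub !sub_capmx (submx_trans KH HZ) capmxSr yZ.
have yK : ~~ (y <= K)%MS by apply: contra yX => /submx_trans->; rewrite ?capmxSl.
by rewrite mxrank_adds_row yK /=; lia.
Qed.

Definition step_towards (Y X : 'M[F]_n) : 'M[F]_n :=
  odflt X [pick Z in Er | (dI X Z <= 1)%N && (dI Z Y < dI X Y)%N].

Definition walk (X Y : 'M[F]_n) j := iter j (step_towards Y) X.

Lemma step_towardsP (X Y : 'M[F]_n) : X \in Er -> Y \in Er ->
  [/\ step_towards Y X \in Er, (dI X (step_towards Y X) <= 1)%N &
      (dI (step_towards Y X) Y <= (dI X Y).-1)%N].
Proof.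
move=> hX hY; rewrite /step_towards; case: pickP => [Z /and3P [hZ dXZ dZY]|none] /=.
  by split => //; rewrite -ltnS prednK // (leq_ltn_trans _ dZY).
rewrite (dIxx hX); split => //; case: (posnP (dI X Y)) => [-> //|dXY_gt0].
by have [Z [hZ dXZ dZY]] := exists_step_towards hX hY dXY_gt0; have := none Z; rewrite hZ dXZ dZY.
Qed.

Section Walk.
Variables (X Y : 'M[F]_n).
Hypotheses (hX : X \in Er) (hY : Y \in Er).

Lemma walk_Er j : walk X Y j \in Er.
Proof. by elim: j => [//|j IHj]; rewrite /walk iterS; case: (step_towardsP IHj hY). Qed.

Lemma dI_walkS j : (dI (walk X Y j) (walk X Y j.+1) <= 1)%N.
Proof. by rewrite /walk iterS; case: (step_towardsP (walk_Er j) hY). Qed.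

Lemma dI_walk_target j : (dI (walk X Y j) Y <= dI X Y - j)%N.
Proof.
elim: j => [|j IHj]; first by rewrite subn0.
rewrite /walk iterS; case: (step_towardsP (walk_Er j) hY) => _ _ /leq_trans-> //.
by rewrite subnS -!subn1 leq_sub2r.
Qed.

Lemma walk_end : walk X Y r = Y.
Proof.
apply: (dI_eq0 (walk_Er r) hY); apply/eqP; rewrite -leqn0.
by rewrite (leq_trans (dI_walk_target r)) // leqn0 subn_eq0 (dI_le hX hY).
Qed.

End Walk.

End Geodesics.

Lemma nat_ivt (f : nat -> nat) N d :
  (forall j, f j.+1 <= (f j).+1)%N -> (f 0 <= d <= f N)%N -> exists j, f j = d.
Proof.
move=> step; elim: N => [|N IHN] /andP [f0d dfN]; first by exists 0; apply/eqP; rewrite eqn_leq f0d.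
case: (leqP d (f N)) => [dfN'|fNd]; first by apply: IHN; rewrite f0d.
by exists N.+1; apply/eqP; rewrite eqn_leq dfN andbT (leq_trans (step N)).
Qed.

Section CoveringCodes.
Variables (F : finFieldType) (n r : nat).
Hypothesis rn : (r <= n)%N.
Local Notation Er := (Er F n r).
Local Notation dI := (@dI F n).

Definition dist_code (D : {set 'M[F]_n}) (U : 'M[F]_n) : nat :=
  \big[minn/n]_(c in D) dI U c.

Lemma covradE (D : {set 'M[F]_n}) : covrad r D = \max_(U in Er) dist_code D U.
Proof. by []. Qed.

Variable D : {set 'M[F]_n}.
Hypothesis DEr : D \subset Er.

Lemma dist_code_le U c : c \in D -> (dist_code D U <= dI U c)%N.
Proof. by move=> cD; rewrite /dist_code -minEnat; exact: (@bigmin_le_cond _ nat). Qed.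

Lemma dist_code_attained U c0 : c0 \in D -> U \in Er ->
  exists2 c, c \in D & dist_code D U = dI U c.
Proof.
move=> c0D hU; rewrite /dist_code -minEnat (bigmin_eq_arg _ c0) //.
  by exists [arg min_(c < c0 in D) dI U c]%O; case: arg_minP.
by move=> c cD; apply: leq_trans (dI_le hU (subsetP DEr c cD)) rn.
Qed.

Lemma dist_code_le_covrad U : U \in Er -> (dist_code D U <= covrad r D)%N.
Proof. by move=> hU; rewrite covradE (leq_bigmax_cond (F := dist_code D)). Qed.

Lemma covrad_attained U0 : U0 \in Er -> exists2 U, U \in Er & dist_code D U = covrad r D.
Proof.
move=> hU0; exists [arg max_(U > U0 in Er) dist_code D U]; first by case: arg_maxnP.
by rewrite covradE (bigop.bigmax_eq_arg U0).
Qed.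

Lemma dist_code_lipschitz U U' c0 : c0 \in D -> U \in Er -> U' \in Er ->
  (dI U U' <= 1)%N -> (dist_code D U' <= (dist_code D U).+1)%N.
Proof.
move=> c0D hU hU' dUU'; have [c cD ->] := dist_code_attained c0D hU.
apply: leq_trans (dist_code_le U' cD) _; rewrite -add1n.
by rewrite (leq_trans (dI_triangle hU' hU (subsetP DEr c cD))) // leq_add2r dI_sym.
Qed.

End CoveringCodes.

Section CovradInterpolation.
Variables (F : finFieldType) (n r : nat).
Hypothesis rn : (r <= n)%N.
Local Notation Er := (Er F n r).
Local Notation dI := (@dI F n).

Lemma covrad_le_neighbour (D D' : {set 'M[F]_n}) c0 :
  D \subset Er -> D' \subset Er -> c0 \in D ->
  (forall x, x \in D -> exists2 y, y \in D' & (dI x y <= 1)%N) ->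
  (covrad r D' <= (covrad r D).+1)%N.
Proof.
move=> DEr D'Er c0D near; rewrite [covrad r D']covradE; apply/bigmax_leqP => U hU.
have [c cD dUD] := dist_code_attained rn DEr c0D hU.
have [y yD' dcy] := near c cD.
apply: leq_trans (dist_code_le _ yD') _.
apply: leq_trans (dI_triangle hU (subsetP DEr c cD) (subsetP D'Er y yD')) _.
by rewrite -addn1 leq_add // -dUD dist_code_le_covrad.
Qed.

Lemma exists_dist_code_eq (D : {set 'M[F]_n}) c0 delta :
  D \subset Er -> c0 \in D -> (delta <= covrad r D)%N ->
  exists2 U, U \in Er & dist_code D U = delta.
Proof.
move=> DEr c0D dD; have hc0 := subsetP DEr c0 c0D.
have [U hU dU] := covrad_attained D hc0.
pose f j := dist_code D (walk r c0 U j).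
have [j fj] : exists j, f j = delta.
  apply: (@nat_ivt f r) => [j|]; rewrite /f.
    exact: (dist_code_lipschitz rn DEr c0D (walk_Er hc0 hU j) (walk_Er hc0 hU j.+1)
      (dI_walkS hc0 hU j)).
  by rewrite walk_end // dU dD andbT (leq_trans (dist_code_le _ c0D)) // (dIxx hc0).
by exists (walk r c0 U j); rewrite ?walk_Er.
Qed.

Lemma exists_far_Er (z : 'M[F]_n) : z \in Er -> (r + r <= n)%N ->
  exists2 w, w \in Er & dI w z = r.
Proof.
move=> hz rrn; have [B [Bz rB]] : exists B : 'M[F]_n, (B <= z^C)%MS /\ \rank B = r.
  by apply: exists_submx_rank; rewrite mxrank_compl (Er_rank hz) leq_subRL.
have hw := genmx_Er rB; exists <<B>>%MS => //; have := mxrank_cap_dI hw hz.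
suff -> : (<<B>> :&: z)%MS = 0 by rewrite mxrank0.
rewrite capmxC; apply: (capmx_eq0S (submx_refl z) _ (capmx_compl z)).
by rewrite genmxE.
Qed.

(* Pulling every codeword of C one step towards a fixed codeword c0 raises the
   covering radius by at most one, and after r steps the code is {c0}. *)
Lemma exists_code_covrad_eq (C : {set 'M[F]_n}) c0 delta :
  C \subset Er -> c0 \in C -> (covrad r C <= delta)%N -> (delta <= r)%N ->
  (r + r <= n)%N ->
  exists D : {set 'M[F]_n},
    [/\ D \subset Er, D != set0, (#|D| <= #|C|)%N & covrad r D = delta].
Proof.
move=> CEr c0C Cdelta deltar rrn; have hc0 := subsetP CEr c0 c0C.
pose E t := [set walk r c c0 t | c in C].
have EEr t : E t \subset Er.
  by apply/subsetP => _ /imsetP [c cC ->]; rewrite walk_Er ?(subsetP CEr).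
have c0E t : walk r c0 c0 t \in E t by apply: imset_f.
have [t covEt] : exists t, covrad r (E t) = delta.
  apply: (@nat_ivt (fun t => covrad r (E t)) r) => [t|] /=.
    apply: (covrad_le_neighbour (EEr t) (EEr t.+1) (c0E t)) => _ /imsetP [c cC ->].
    by exists (walk r c c0 t.+1); rewrite ?imset_f ?dI_walkS ?(subsetP CEr).
  have -> : E 0%N = C by rewrite /E /walk imset_id.
  rewrite Cdelta (leq_trans deltar) //.
  have [w hw dwc0] := exists_far_Er hc0 rrn.
  rewrite (leq_trans _ (dist_code_le_covrad _ hw)) //.
  have [_ /imsetP [c cC ->] ->] := dist_code_attained rn (EEr r) (c0E r) hw.
  by rewrite walk_end ?(subsetP CEr) ?dwc0.
exists (E t); split => //; last exact: leq_imset_card.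
by apply/set0Pn; exists (walk r c0 c0 t).
Qed.

End CovradInterpolation.

Lemma sum_by_value (T : finType) (D : {set T}) (h : T -> nat) (g : nat -> nat) m :
  (forall c, c \in D -> h c <= m)%N ->
  (\sum_(c in D) g (h c) = \sum_(i < m.+1) #|[set c in D | h c == i]| * g i)%N.
Proof.
move=> hm; rewrite (partition_big (fun c => inord (h c) : 'I_m.+1) xpredT) //=.
apply: eq_bigr => i _; rewrite -sum1_card big_distrl /= big_mkcond [RHS]big_mkcond /=.
apply: eq_bigr => c; rewrite inE; case cD: (c \in D) => //=.
by rewrite -(inj_eq val_inj) /= inordK ?ltnS ?hm //; case: eqP => [->|]; rewrite ?mul1n.
Qed.

Lemma card_leq_split (T : finType) (P : pred T) (h : T -> nat) k :
  (#|[set x | P x && (h x <= k)]| = \sum_(s < k.+1) #|[set x | P x && (h x == s)]|)%N.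
Proof.
rewrite -sum1_card (@sum_by_value _ _ h (fun _ => 1%N) k) => [|x]; last by rewrite inE => /andP [].
apply: eq_bigr => s _; rewrite muln1; apply: eq_card => x; rewrite !inE -andbA.
by case: eqP => [->|]; rewrite ?andbF // -ltnS ltn_ord.
Qed.

Section DistanceProfile.
Variables (F : finFieldType) (n r : nat).
Hypothesis rn : (r <= n)%N.
Local Notation Er := (Er F n r).
Local Notation dI := (@dI F n).
Variables (D : {set 'M[F]_n}) (U : 'M[F]_n).
Hypotheses (DEr : D \subset Er) (hU : U \in Er).

Definition dist_profile i := #|[set c in D | dI U c == i]|.

Lemma sum_dist_profile_by g :
  (\sum_(c in D) g (dI U c) = \sum_(i < r.+1) dist_profile i * g i)%N.
Proof. by apply: sum_by_value => c cD; rewrite (dI_le hU (subsetP DEr c cD)). Qed.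

Lemma sum_dist_profile : (\sum_(i < r.+1) dist_profile i)%N = #|D|.
Proof.
by rewrite -sum1_card (sum_dist_profile_by (fun _ => 1%N)); apply: eq_bigr => i; rewrite muln1.
Qed.

Lemma dist_profile_le_sphere i : (dist_profile i <= #|sphere r U i|)%N.
Proof.
apply: subset_leq_card; apply/subsetP => c; rewrite [c \in _]inE => /andP [cD dUc].
by rewrite inE (subsetP DEr c cD) dI_sym.
Qed.

Lemma dist_profile_lt_dist_code i : (i < dist_code D U)%N -> dist_profile i = 0%N.
Proof.
move=> i_lt; apply/eqP; rewrite cards_eq0; apply/eqP/setP => c; rewrite !inE.
by apply/negbTE; apply: contraTN i_lt => /andP [cD /eqP <-]; rewrite -leqNgt dist_code_le.
Qed.

Lemma dist_profile_dist_code_gt0 c0 : c0 \in D -> (0 < dist_profile (dist_code D U))%N.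
Proof.
move=> c0D; have [c cD ->] := dist_code_attained rn DEr c0D hU.
by rewrite card_gt0; apply/set0Pn; exists c; rewrite !inE cD eqxx.
Qed.

(* Double counting of the pairs (W, c) with W in the sphere and d_I(W, c) <= rho. *)
Lemma card_sphere_le_profile_JC rho l c0 : c0 \in D -> (covrad r D <= rho)%N ->
  (#|sphere r U l| <= \sum_(i < r.+1) dist_profile i * \sum_(s < rho.+1) JC F n r l s i)%N.
Proof.
move=> c0D covD.
have ball_JC c : c \in D -> #|[set W in sphere r U l | (dI W c <= rho)%N]| =
    (\sum_(s < rho.+1) JC F n r l s (dI U c))%N.
  move=> cD; rewrite (card_leq_split (fun W => W \in sphere r U l)); apply: eq_bigr => s _.
  by rewrite (JC_dI _ _ hU (subsetP DEr c cD)); apply: eq_card => W; rewrite !inE andbA.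
rewrite -(sum_dist_profile_by (fun i => \sum_(s < rho.+1) JC F n r l s i)%N).
rewrite -(eq_bigr _ ball_JC) -sum1_card.
apply: (@leq_trans (\sum_(W in sphere r U l) \sum_(c in D) (dI W c <= rho)%N)).
  apply: leq_sum => W; rewrite inE => /andP [hW _].
  have [c cD dWD] := dist_code_attained rn DEr c0D hW.
  rewrite (bigD1 c) //= -dWD (leq_trans (dist_code_le_covrad D hW) covD).
  exact: leq_addr.
rewrite exchange_big leq_sum // => c cD; rewrite -sum1_card.
rewrite [X in (_ <= X)%N](eq_bigl (fun W => (W \in sphere r U l) && (dI W c <= rho)%N))
  => [|W]; last by rewrite inE.
by rewrite big_mkcondr leq_sum // => W _; case: (_ <= _)%N.
Qed.

End DistanceProfile.

Section OptimalCodes.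
Variables (F : finFieldType) (n r : nat).
Hypothesis rn : (r <= n)%N.
Local Notation Er := (Er F n r).

Lemma Er_neq0 : Er != set0.
Proof.
have [B [_ rB]] : exists B : 'M[F]_n, (B <= 1%:M)%MS /\ \rank B = r.
  by apply: exists_submx_rank; rewrite mxrank1.
by apply/set0Pn; exists <<B>>%MS; apply: genmx_Er.
Qed.

Lemma covrad_Er : covrad r Er = 0%N.
Proof.
apply/eqP; rewrite -leqn0 covradE; apply/bigmax_leqP => U hU.
by rewrite -(dIxx hU) dist_code_le.
Qed.

Lemma KC_attained rho : exists C : {set 'M[F]_n},
  [/\ C \subset Er, C != set0, (covrad r C <= rho)%N & #|C| = KC F n r rho].
Proof.
pose P (C : {set 'M[F]_n}) := [&& C \subset Er, C != set0 & (covrad r C <= rho)%N].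
have PEr : P Er by rewrite /P subxx Er_neq0 covrad_Er.
have KCE : KC F n r rho = #|[arg min_(C < Er | P C) #|C|]%O|.
  by rewrite /KC -minEnat (bigmin_eq_arg _ Er) // => C /and3P [CEr _ _]; apply: subset_leq_card.
by exists [arg min_(C < Er | P C) #|C|]%O; rewrite KCE; case: arg_minP => // C /and3P [].
Qed.

Lemma exists_code_dist_code_eq (C : {set 'M[F]_n}) rho delta :
  C \subset Er -> C != set0 -> (covrad r C <= rho)%N -> (delta <= rho)%N ->
  (rho <= r)%N -> (r + r <= n)%N ->
  exists D : {set 'M[F]_n}, exists2 U, U \in Er &
    [/\ D \subset Er, D != set0, (covrad r D <= rho)%N, (#|D| <= #|C|)%N &
        dist_code D U = delta].
Proof.
move=> CEr /set0Pn [c0 c0C] covC delta_rho rho_r rrn.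
case: (leqP delta (covrad r C)) => [deltaC|Cdelta].
  have [U hU dU] := exists_dist_code_eq rn CEr c0C deltaC.
  by exists C; exists U => //; split => //; apply/set0Pn; exists c0.
have [D [DEr D0 DC covD]] :=
  exists_code_covrad_eq rn CEr c0C (ltnW Cdelta) (leq_trans delta_rho rho_r) rrn.
have /set0Pn [d0 d0D] := D0.
have [U hU dU] := exists_dist_code_eq rn DEr d0D (eq_leq (esym covD)).
by exists D; exists U => //; split; rewrite ?covD.
Qed.

End OptimalCodes.

Section Feasibility.
Variables (F : finFieldType) (n r rho : nat).
Hypothesis rrn : (r + r <= n)%N.
Local Notation Er := (Er F n r).
Variables (D : {set 'M[F]_n}) (U : 'M[F]_n).
Hypotheses (DEr : D \subset Er) (D0 : D != set0) (hU : U \in Er).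
Hypothesis covD : (covrad r D <= rho)%N.

Let rn : (r <= n)%N. Proof. exact: leq_trans (leq_addr r r) rrn. Qed.

Lemma dist_profile_le_NC i : (i <= r)%N ->
  ((Posz (dist_profile D U i))%:~R : rat) <= NC #|F| n r i.
Proof.
move=> ir; rewrite -pmulrn -(card_sphere hU ir) ?(leq_trans _ rrn) ?leq_add2l //.
by rewrite ler_nat dist_profile_le_sphere.
Qed.

Lemma feasible_dist_profile :
  feasible F n r rho (dist_code D U) (fun i => Posz (dist_profile D U i)).
Proof.
have /set0Pn [c0 c0D] := D0.
have dUr : (dist_code D U <= r)%N.
  by rewrite (leq_trans (dist_code_le _ c0D)) // (dI_le hU (subsetP DEr c0 c0D)).
split; [|split; [|split]].
- by move=> i /dist_profile_lt_dist_code ->.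
- by rewrite lez_nat (dist_profile_dist_code_gt0 rn DEr hU c0D) dist_profile_le_NC.
- by move=> i /andP [_ ir]; rewrite lez_nat dist_profile_le_NC.
move=> l lr; rewrite -(card_sphere hU lr) ?(leq_trans _ rrn) ?leq_add2l //.
have := card_sphere_le_profile_JC rn DEr hU l c0D covD; rewrite -(ler_nat rat) => /le_trans->//.
by rewrite natr_sum le_eqVlt; apply/predU1l/eq_bigr => i _; rewrite natrM pmulrn.
Qed.

End Feasibility.

Lemma exists_min_int (P : int -> Prop) (m : int) :
  P m -> (forall z, P z -> 0 <= z) ->
  exists2 t, P t /\ t <= m & forall z, P z -> t <= z.
Proof.
move=> Pm P_ge0; case: m Pm (P_ge0 _ Pm) => // k Pk _.
elim/ltn_ind: k Pk => k IHk Pk.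
case: (classic (exists2 j : nat, (j < k)%N & P j)) => [[j jk Pj]|none].
  have [t [Pt tj] tmin] := IHk j jk Pj.
  exists t => //; split => //.
  by rewrite (le_trans tj) // lez_nat ltnW.
exists (Posz k) => // z Pz; case: z Pz (P_ge0 z Pz) => // j Pj _.
by rewrite lez_nat leqNgt; apply/negP => jk; apply: none; exists j.
Qed.

Lemma feasible_sum_ge0 (F : finFieldType) n r rho delta A :
  feasible F n r rho delta A -> 0 <= \sum_(i < r.+1) A i.
Proof.
case=> A_lt [[A_delta _] [A_gt _]]; apply: sumr_ge0 => i _.
case: (ltngtP i delta) => [/A_lt -> //|delta_i|->]; last exact: le_trans A_delta.
by case: (A_gt i) => //; rewrite delta_i -ltnS ltn_ord.
Qed.

Lemma exists_is_T_le (F : finFieldType) n r rho delta A :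
  feasible F n r rho delta A ->
  exists2 t, is_T F n r rho delta t & t <= \sum_(i < r.+1) A i.
Proof.
move=> feasA.
pose P z := exists B, feasible F n r rho delta B /\ \sum_(i < r.+1) B i = z.
have P_ge0 z : P z -> 0 <= z by case=> B [feasB <-]; apply: feasible_sum_ge0 feasB.
have [|t [Pt tA] tmin] := @exists_min_int P (\sum_(i < r.+1) A i) _ P_ge0; first by exists A.
by exists t => //; split => // B feasB; apply: tmin; exists B.
Qed.

Theorem proposition5 (F : finFieldType) (n r rho : nat)
  (hr : (r <= n./2)%N) (hrho0 : (0 < rho)%N) (hrho : (rho < r)%N) :
  forall delta : nat, (delta <= rho)%N ->
    exists t : int, is_T F n r rho delta t /\ t <= (KC F n r rho)%:Z.
Proof.
move=> delta delta_rho.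
have rrn : (r + r <= n)%N by rewrite addnn -geq_half_double.
have rn : (r <= n)%N := leq_trans (leq_addr r r) rrn.
have [C [CEr C0 covC <-]] := KC_attained F rn rho.
have [D [U hU [DEr D0 covD DC <-]]] :=
  exists_code_dist_code_eq rn CEr C0 covC delta_rho (ltnW hrho) rrn.
have [t Tt tD] := exists_is_T_le (feasible_dist_profile rrn DEr D0 hU covD).
have sumA : \sum_(i < r.+1) Posz (dist_profile D U i) = #|D| :> int.
  by rewrite -(sum_dist_profile DEr hU) -natz natr_sum; under eq_bigr do rewrite natz.
by exists t; split => //; rewrite (le_trans tD) // sumA lez_nat.
Qed.
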